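(* Let $\theta>\kappa>0$ and $\eta_t=1/(\kappa t+2\theta)$. Let $p\in\mathcal X$ be fixed. Let $(\pi^t)_{t\ge0}$ be $\mathcal X$-valued random variables adapted to a filtration $(\mathcal F_t)_{t\ge0}$, i.e. $\pi^t$ is $\mathcal F_t$-measurable. Let $\xi_i^t\in\mathbb R^{d_i}$ be random vectors with $\mathbb E[\xi_i^t\mid\mathcal F_t]=0$ and $\mathbb E[\|\xi_i^t\|^2\mid\mathcal F_t]\le C^2$ for all $i\in[N]$ and $t\ge0$. Suppose that for all $t\ge0$, almost surely, $$D_\psi(p,\pi^{t+1})-D_\psi(p,\pi^t)+D_\psi(\pi^{t+1},\pi^t)\le\eta_t\big(\theta D_\psi(\pi^{t+1},\pi^t)-\kappa D_\psi(p,\pi^t)\big)+\eta_t\sum_{i=1}^N\langle\xi_i^t,\pi_i^{t+1}-p_i\rangle.$$ Then for all $t\ge0$, $$\mathbb E[D_\psi(p,\pi^{t+1})]\le\frac{2\theta-\kappa}{\kappa t+2\theta}D_\psi(p,\pi^0)+\frac{NC^2}{\rho(\kappa t+2\theta)}\Big(\frac1\kappa\log\Big(\frac\kappa{2\theta}t+1\Big)+\frac1{2\theta}\Big).$$ (In the paper, $p=\pi^{\mu,\sigma}$.)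
   Context: For each $i\in[N]$, $\mathcal X_i\subseteq\mathbb R^{d_i}$ is a nonempty compact convex set, and $\mathcal X=\prod_i\mathcal X_i$. The norm is Euclidean, with $\|\pi\|^2=\sum_i\|\pi_i\|^2$. Regularizer. $\psi:\mathcal X_i\to\mathbb R$ is differentiable and $\rho$-strongly convex with respect to $\|\cdot\|$ ($\rho>0$). Bregman divergence: $D_\psi(x,y)=\psi(x)-\psi(y)-\langle\nabla\psi(y),x-y\rangle$, and $D_\psi(\pi,\pi')=\sum_iD_\psi(\pi_i,\pi_i')$. Here $\pi^0$ is deterministic. *)

From HB Require Import structures.
From mathcomp Require Import all_boot all_order all_algebra.
From mathcomp Require Import all_classical all_reals all_analysis.
Set Implicit Arguments. Unset Strict Implicit. Unset Printing Implicit Defensive.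
Import Order.TTheory GRing.Theory Num.Theory.
Import numFieldNormedType.Exports.
Local Open Scope classical_set_scope.
Local Open Scope ring_scope.

Definition einner (R : realType) (n : nat) (x y : 'rV[R]_n) : R :=
  \sum_(j < n) x ord0 j * y ord0 j.
Definition enorm (R : realType) (n : nat) (x : 'rV[R]_n) : R :=
  Num.sqrt (einner x x).

Definition strongly_convex_on (R : realType) (n : nat) (S : set 'rV[R]_n)
    (f : 'rV[R]_n -> R) (rho : R) : Prop :=
  forall x y l, S x -> S y -> 0 <= l <= 1 ->
    f (l *: x + (1 - l) *: y) <=
      l * f x + (1 - l) * f y - rho / 2 * l * (1 - l) * enorm (x - y) ^+ 2.

(* Bregman divergence D_psi(x,y) = psi x - psi y - <grad psi(y), x - y>,
   where <grad psi(y), v> is the (Frechet) differential 'd psi y applied to v. *)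
Definition bregman (R : realType) (n : nat) (psi : 'rV[R]_n -> R)
    (x y : 'rV[R]_n) : R :=
  psi x - psi y - ('d psi y : 'rV[R]_n -> R) (x - y).

Definition bregmanP (R : realType) (N : nat) (dim : 'I_N -> nat)
    (psi : forall i, 'rV[R]_(dim i) -> R)
    (x y : forall i, 'rV[R]_(dim i)) : R :=
  \sum_(i < N) bregman (psi i) (x i) (y i).

Definition measurable_wrt (d : measure_display) (T : measurableType d)
    (R : realType) (G : set (set T)) (f : T -> R) : Prop :=
  forall B : set R, measurable B -> G (f @^-1` B).

From HB Require Import structures.
From mathcomp Require Import all_boot all_order all_algebra.
From mathcomp Require Import all_classical all_reals all_analysis.
From mathcomp Require Import ring lra.
Import Order.TTheory GRing.Theory Num.Theory.
Import numFieldNormedType.Exports measurable_realfun.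
Set Implicit Arguments. Unset Strict Implicit. Unset Printing Implicit Defensive.
Local Open Scope classical_set_scope.
Local Open Scope ring_scope.

(* Strong convexity makes every Bregman divergence at least [rho / 2] times a
   squared distance, so Young's inequality absorbs the noise term
   [<xi^t, pi^(t+1) - pi^t>] into [D(pi^(t+1), pi^t)], up to
   [eta_t^2 / rho * |xi^t|^2].  The remaining noise term [<xi^t, pi^t - p>] has
   zero mean, because [pi^t] is bounded and [F_t]-measurable while [xi^t] has
   zero conditional mean; this is proved by approximating [pi^t] uniformly by
   [F_t]-simple functions.  Taking expectations,
   [E D_(t+1) <= (1 - kappa eta_t) E D_t + eta_t^2 N C^2 / rho];
   multiplied by [1 / eta_t = kappa t + 2 theta] this telescopes, and
   [sum_(s <= t) eta_s] is bounded by comparison with [ln]. *)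

Lemma bregman_ge_sqr_enorm (R : realType) n (S : set 'rV[R]_n)
    (f : 'rV[R]_n -> R) rho x y :
  strongly_convex_on S f rho -> S x -> S y -> differentiable f y ->
  rho / 2 * enorm (x - y) ^+ 2 <= bregman f x y.
Proof.
move=> fsc Sx Sy df; set v := x - y; set c := rho / 2 * enorm v ^+ 2.
have dq : (fun h : R => h^-1 *: ((f \o shift y) (h *: v) - f y)) @ 0^'+
    --> 'd f y v.
  by rewrite -deriveE //; apply: cvg_dnbhs_at_right; exact: diff_derivable.
have lin : (fun h : R => f x - f y - c + c * h) @ 0^'+ --> f x - f y - c.
  rewrite -[X in _ --> X]addr0 -[X in _ --> _ + X](mulr0 c).
  apply: cvg_at_right_filter; apply: cvgD; first exact: cvg_cst.
  by apply: cvgM; [exact: cvg_cst | exact: cvg_id].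
suff : 'd f y v <= f x - f y - c by rewrite /bregman -/v /c; lra.
apply: (ler_cvg_to dq lin); near=> h.
have h0 : 0 < h by near: h; exact: nbhs_right_gt.
have h1 : h < 1 by near: h; exact: nbhs_right_lt.
(* strong convexity at [y + h v = h x + (1 - h) y], divided by [h] *)
have := fsc x y h Sx Sy; rewrite (ltW h0) (ltW h1) => /(_ isT).
have -> : h *: x + (1 - h) *: y = h *: v + y.
  by rewrite /v scalerBr scalerBl scale1r [y - _]addrC addrA.
move=> conv; rewrite -(ler_pM2l h0) /= -[h * _]/(h *: _) scalerA.
rewrite mulfV ?gt_eqF // scale1r.
rewrite /c; nra.
Unshelve. all: by end_near.
Qed.

Lemma bregmanP_ge_sum_sqr (R : realType) N (dim : 'I_N -> nat)
    (X : forall i, set 'rV[R]_(dim i)) (psi : forall i, 'rV[R]_(dim i) -> R)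
    rho (x y : forall i, 'rV[R]_(dim i)) :
  (forall i, strongly_convex_on (X i) (psi i) rho) ->
  (forall i, X i (x i)) -> (forall i, X i (y i)) ->
  (forall i, differentiable (psi i) (y i)) ->
  rho / 2 * \sum_(i < N) enorm (x i - y i) ^+ 2 <= bregmanP psi x y.
Proof.
move=> psisc Xx Xy dpsi; rewrite mulr_sumr; apply: ler_sum => i _.
exact: bregman_ge_sqr_enorm.
Qed.

Lemma bregmanP_ge0 (R : realType) N (dim : 'I_N -> nat)
    (X : forall i, set 'rV[R]_(dim i)) (psi : forall i, 'rV[R]_(dim i) -> R)
    rho (x y : forall i, 'rV[R]_(dim i)) :
  0 <= rho -> (forall i, strongly_convex_on (X i) (psi i) rho) ->
  (forall i, X i (x i)) -> (forall i, X i (y i)) ->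
  (forall i, differentiable (psi i) (y i)) ->
  0 <= bregmanP psi x y.
Proof.
move=> rho0 psisc Xx Xy dpsi.
apply: le_trans _ (bregmanP_ge_sum_sqr psisc Xx Xy dpsi).
by rewrite mulr_ge0 ?divr_ge0 ?sumr_ge0 // => i _; exact: sqr_ge0.
Qed.

Lemma enorm_sqr (R : realType) n (x : 'rV[R]_n) :
  enorm x ^+ 2 = \sum_(j < n) x ord0 j ^+ 2.
Proof.
rewrite /enorm sqr_sqrtr /einner; first by apply: eq_bigr => j _; rewrite expr2.
by apply: sumr_ge0 => j _; rewrite -expr2 sqr_ge0.
Qed.

Lemma sqr_coord_le_enorm (R : realType) n (x : 'rV[R]_n) j :
  x ord0 j ^+ 2 <= enorm x ^+ 2.
Proof.
rewrite enorm_sqr (bigD1 j) //= lerDl; apply: sumr_ge0 => i _; exact: sqr_ge0.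
Qed.

Lemma compact_row_coord_bounded (R : realType) n (S : set 'rV[R]_n) :
  compact S -> exists M : R, forall x, S x -> forall j, `|x ord0 j| <= M.
Proof.
move=> /compact_bounded[M [_ HM]]; exists (M + 1) => x Sx j.
have xM : `|x| <= M + 1 by apply: HM Sx; rewrite ltrDl.
apply: le_trans xM; change (`|x ord0 j| <= mx_norm x); rewrite mx_normrE.
exact: (le_bigmax _ (fun ij : 'I_1 * 'I_n => `|x ij.1 ij.2|) (ord0, j)).
Qed.

Lemma einnerDr (R : realType) n (z x y : 'rV[R]_n) :
  einner z (x + y) = einner z x + einner z y.
Proof. by rewrite /einner -big_split; apply: eq_bigr => j _; rewrite mxE mulrDr. Qed.

Lemma einner_young (R : realType) n (rho eta : R) (x y : 'rV[R]_n) : 0 < rho ->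
  eta * einner x y <= rho / 4 * enorm y ^+ 2 + eta ^+ 2 / rho * enorm x ^+ 2.
Proof.
move=> rho0; rewrite !enorm_sqr /einner !mulr_sumr -big_split /=.
apply: ler_sum => j _; rewrite -subr_ge0.
have -> : rho / 4 * y ord0 j ^+ 2 + eta ^+ 2 / rho * x ord0 j ^+ 2
    - eta * (x ord0 j * y ord0 j) = (rho / 2 * y ord0 j - eta * x ord0 j) ^+ 2 / rho.
  by field; rewrite gt_eqF.
by rewrite divr_ge0 ?sqr_ge0 ?ltW.
Qed.

Lemma descent_step (R : realFieldType) (rho eta theta kappa D1 D0 B Q S1 S2 W : R) :
  0 < rho -> 0 < eta -> theta * eta <= 1 / 2 -> rho / 2 * Q <= B -> 0 <= Q ->
  eta * S1 <= rho / 4 * Q + W ->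
  D1 - D0 + B <= eta * (theta * B - kappa * D0) + eta * (S1 + S2) ->
  D1 <= (1 - kappa * eta) * D0 + W + eta * S2.
Proof.
move=> rho0 eta0 eta_le QB Q0 S1W step.
have B0 : 0 <= B by apply: le_trans QB; rewrite mulr_ge0 // divr_ge0 // ltW.
(* half of [B] absorbs the Young remainder [rho / 4 * Q] *)
have : 0 <= (1 / 2 - theta * eta) * B by rewrite mulr_ge0 ?subr_ge0.
nra.
Qed.

Section StepSize.
Variables (R : realType) (kappa theta : R).
Hypotheses (kappa_gt0 : 0 < kappa) (theta_gt0 : 0 < theta).

Definition stepsize (t : nat) : R := 1 / (kappa * t%:R + 2 * theta).

Lemma stepsize_denom_gt0 t : 0 < kappa * t%:R + 2 * theta.
Proof.
apply: ltr_wpDl; first by rewrite mulr_ge0 ?ler0n ?ltW.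
by rewrite mulr_gt0.
Qed.

Lemma stepsize_gt0 t : 0 < stepsize t.
Proof. by rewrite divr_gt0 ?stepsize_denom_gt0. Qed.

Lemma theta_stepsize_le_half t : theta * stepsize t <= 1 / 2.
Proof.
rewrite /stepsize mulrA mulr1 ler_pdivrMr ?stepsize_denom_gt0 //.
have : 0 <= kappa * t%:R by rewrite mulr_ge0 ?ler0n ?ltW.
lra.
Qed.

(* [(kappa t + 2 theta) a_(t+1) <= (kappa (t - 1) + 2 theta) a_t + B eta_t]
   telescopes. *)
Lemma stepsize_recursion (B : R) (a : nat -> R) :
  (forall t, a t.+1 <= (1 - kappa * stepsize t) * a t + stepsize t ^+ 2 * B) ->
  forall t, a t.+1 <=
    stepsize t * ((2 * theta - kappa) * a 0%N + B * \sum_(s < t.+1) stepsize s).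
Proof.
move=> rec.
pose q (t : nat) := kappa * t%:R + 2 * theta.
have step t : q t * a t.+1 <= (q t - kappa) * a t + B * stepsize t.
  have := rec t; rewrite -(ler_pM2l (stepsize_denom_gt0 t)) => rec_t.
  apply: le_trans rec_t _; rewrite le_eqVlt; apply/orP; left; apply/eqP.
  rewrite /stepsize /q; field; exact/lt0r_neq0/stepsize_denom_gt0.
have telescope t :
    q t * a t.+1 <= (2 * theta - kappa) * a 0%N + B * \sum_(s < t.+1) stepsize s.
  elim: t => [|t IH].
    by have := step 0%N; rewrite big_ord1 /q mulr0 add0r.
  rewrite big_ord_recr /= mulrDr addrA; apply: le_trans (step t.+1) _.
  by rewrite lerD2r /q -natr1 mulrDr mulr1 addrAC addrK.
move=> t; have qt : 0 < q t := stepsize_denom_gt0 t.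
rewrite {1}/stepsize div1r -(ler_pM2l qt) mulrA mulfV ?gt_eqF // mul1r.
exact: telescope.
Qed.

Lemma sum_stepsize_le_ln t :
  \sum_(s < t.+1) stepsize s <=
  1 / (2 * theta) + 1 / kappa * ln (kappa / (2 * theta) * t%:R + 1).
Proof.
elim: t => [|t IH].
  by rewrite big_ord1 /stepsize mulr0 add0r mulr0 add0r ln1 mulr0 addr0.
rewrite big_ord_recr /=.
set u := kappa / (2 * theta) * t%:R + 1.
set v := kappa / (2 * theta) * t.+1%:R + 1.
have kt0 : 0 < kappa / (2 * theta) by rewrite divr_gt0 ?mulr_gt0.
have u0 : 0 < u by apply: ltr_wpDl; rewrite ?ltr01 // mulr_ge0 ?ler0n ?ltW.
have vu : v = u + kappa / (2 * theta) by rewrite /v /u -addn1 natrD; ring.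
have v0 : 0 < v by rewrite vu addr_gt0.
(* [ln u - ln v = ln (1 + (u - v) / v) <= (u - v) / v] *)
suff : stepsize t.+1 <= 1 / kappa * (ln v - ln u).
  by move=> /(lerD IH); rewrite -addrA -mulrDr addrCA subrr addr0.
have : -1 < (u - v) / v by rewrite ltr_pdivlMr // mulN1r; lra.
move=> /le_ln1Dx; have -> : 1 + (u - v) / v = u / v by field; rewrite gt_eqF.
rewrite ln_div ?posrE // => lnuv.
have -> : stepsize t.+1 = 1 / kappa * ((v - u) / v).
  rewrite {1}vu addrAC subrr add0r /stepsize /v; field.
  by rewrite nat1r !gt_eqF ?stepsize_denom_gt0.
by rewrite ler_pM2l ?divr_gt0 // -[v - u]opprB mulNr; lra.
Qed.

End StepSize.

Lemma sum_ltn_ord (m j : nat) : (j <= m)%N -> (\sum_(k < m) (k < j)%N)%N = j.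
Proof.
move=> jm; rewrite -(big_mkord xpredT (fun k => nat_of_bool (k < j)%N)).
rewrite (big_cat_nat (leq0n j) jm) /=.
rewrite [X in (_ + X)%N]big_nat_cond [X in (_ + X)%N]big1 ?addn0; last first.
  by move=> k /andP[/andP[jk _] _]; rewrite ltnNge jk.
rewrite (@eq_big_nat _ _ _ _ _ _ (fun=> 1%N)) => [|k /andP[_ ->] //].
by rewrite sum_nat_const_nat muln1 subn0.
Qed.

Lemma le0_of_le_harmonicM (R : realType) (x y : R) :
  (forall n, x <= harmonic n * y) -> x <= 0.
Proof.
move=> xy; have hy : harmonic n * y @[n --> \oo] --> 0 * y.
  by apply: cvgM; [exact: cvg_harmonic | exact: cvg_cst].
rewrite mul0r in hy; apply: (ler_cvg_to _ hy); first exact: cvg_cst.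
exact: nearW.
Qed.

Section IntegralFacts.
Variables (d : measure_display) (T : measurableType d) (R : realType).

Lemma integrable_mul_bounded (mu : measure T R) (g f : T -> R) (M : R) :
  mu.-integrable setT (EFin \o g) -> measurable_fun setT f ->
  (forall w, `|f w| <= M) -> mu.-integrable setT (fun w => (g w * f w)%:E).
Proof.
move=> ig mf fM; have fbd : [bounded f w | w in setT].
  by rewrite /bounded_near; near=> M0 => w _ /=; rewrite (le_trans (fM w)).
have := integrableMl measurableT ig mf fbd.
by apply: eq_integrable => // w _ /=; rewrite EFinM.
Unshelve. all: by end_near.
Qed.

Lemma integrable_of_sqr_le (P : probability T R) (f e : T -> R) :
  measurable_fun setT f -> P.-integrable setT (EFin \o e) ->
  (forall w, f w ^+ 2 <= e w) -> P.-integrable setT (EFin \o f).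
Proof.
move=> mf ie fe; have i1e := integrableD measurableT
  (finite_measure_integrable_cst P 1 measurableT) ie.
apply: (le_integrable measurableT _ _ i1e); first exact/measurable_EFinP.
move=> w _ /=; rewrite lee_fin.
have absf : `|f w| <= 1 + f w ^+ 2.
  by case: (lerP 0 (f w)) => f0; [rewrite ger0_norm | rewrite ltr0_norm]; nra.
have := fe w; rewrite [`|1 + e w|]ger0_norm; first lra.
by apply: addr_ge0; [exact: ler01 | exact: le_trans (sqr_ge0 (f w)) (fe w)].
Qed.

Lemma ae_le_integral_ge0 (mu : measure T R) (f g : T -> R) :
  measurable_fun setT f -> measurable_fun setT g -> (forall w, 0 <= f w) ->
  {ae mu, forall w, f w <= g w} ->
  (\int[mu]_w (f w)%:E <= \int[mu]_w (g w)%:E)%E.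
Proof.
move=> mf mg f0 fg; pose g0 := g \max (fun=> 0).
have mg0 : measurable_fun setT g0.
  by apply: measurable_maxr => //; exact: measurable_cst.
have -> : (\int[mu]_w (g w)%:E = \int[mu]_w (g0 w)%:E)%E.
  apply: ae_eq_integral => //; try exact/measurable_EFinP.
  apply: filterS fg => w fgw _ /=; congr EFin.
  by apply/esym/max_idPl; apply: le_trans fgw.
apply: ae_ge0_le_integral => //; try exact/measurable_EFinP.
- by move=> w _; rewrite lee_fin.
- by move=> w _; rewrite lee_fin le_max lexx orbT.
- by apply: filterS fg => w fgw _; rewrite lee_fin le_max fgw.
Qed.

Lemma ge0_lty_integrable (mu : measure T R) (f : T -> R) :
  measurable_fun setT f -> (forall w, 0 <= f w) ->
  (\int[mu]_w (f w)%:E < +oo)%E -> mu.-integrable setT (EFin \o f).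
Proof.
move=> mf f0 fint; apply/integrableP; split; first exact/measurable_EFinP.
by under eq_integral => w _ do rewrite gee0_abs ?lee_fin ?f0 //.
Qed.

Lemma abse_integral_mul_le (mu : measure T R) (g f h : T -> R) (e : R) :
  measurable_fun setT g -> measurable_fun setT f -> measurable_fun setT h ->
  mu.-integrable setT (EFin \o g) -> mu.-integrable setT (fun w => (g w * h w)%:E) ->
  (\int[mu]_w (g w * h w)%:E = 0)%E -> (forall w, `|f w - h w| <= e) ->
  (`|\int[mu]_w (g w * f w)%:E| <= e%:E * \int[mu]_w (`|g w|)%:E)%E.
Proof.
move=> mg mf mh ig igh gh0 fhe.
have mfh : measurable_fun setT (fun w => f w - h w) by exact: measurable_funB.
have igfh := integrable_mul_bounded ig mfh fhe.
have -> : (\int[mu]_w (g w * f w)%:E =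
    \int[mu]_w ((g w * h w)%:E + (g w * (f w - h w))%:E))%E.
  by apply: eq_integral => w _; rewrite -EFinD mulrBr addrC subrK.
rewrite integralD // gh0 add0e.
apply: le_trans (le_abse_integral _ _ _) _ => //.
  by apply/measurable_EFinP; exact: measurable_funM.
rewrite -integralZl //; last exact: integrable_norm.
apply: ge0_le_integral => //.
- apply/measurable_EFinP; apply: measurableT_comp => //; exact: measurable_funM.
- apply: emeasurable_funM => //; apply/measurable_EFinP; exact: measurableT_comp.
- by move=> w _; rewrite -EFinM lee_fin normrM mulrC ler_wpM2r.
Qed.

End IntegralFacts.

Section ZeroConditionalMean.
Variables (d : measure_display) (T : measurableType d) (R : realType).
Variables (P : probability T R) (G : set (set T)) (g : T -> R).
Hypotheses (G_measurable : G `<=` measurable) (G_setT : G setT).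
Hypotheses (mg : measurable_fun setT g) (ig : P.-integrable setT (EFin \o g)).
Hypothesis g_mean0 : forall A, G A -> (\int[P]_(w in A) (g w)%:E = 0)%E.

Lemma integral_mul_indic_eq0 A : G A -> (\int[P]_w (g w * \1_A w)%:E = 0)%E.
Proof.
move=> GA; rewrite -(g_mean0 GA) [RHS]integral_mkcond.
apply: eq_integral => w _; rewrite patchE indicE.
by case: (w \in A); rewrite ?mulr1 ?mulr0.
Qed.

Lemma integrable_mul_indic A :
  G A -> P.-integrable setT (fun w => (g w * \1_A w)%:E).
Proof.
move=> GA; apply: (integrable_mul_bounded (M := 1)) => //.
  exact/measurable_indic/G_measurable.
by move=> w; rewrite indicE; case: (w \in A); rewrite ?normr1 ?normr0.
Qed.

(* [- K + harmonic n * #{k | (k + 1) * harmonic n <= f w + K}]: a [G]-simple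
   function below [f], within [harmonic n] of it wherever [|f| < K]. *)
Definition staircase (f : T -> R) (K n : nat) (w : T) : R :=
  - K%:R + \sum_(k < K * 2 * n.+1)
     harmonic n * \1_(f @^-1` [set` `[k.+1%:R * harmonic n - K%:R, +oo[%R]) w.

Lemma integral_mul_staircase_eq0 f K n : measurable_wrt G f ->
  (\int[P]_w (g w * staircase f K n w)%:E = 0)%E.
Proof.
move=> Gf; pose A (k : nat) := f @^-1` [set` `[k.+1%:R * harmonic n - K%:R, +oo[%R].
have GA k : G (A k) by apply: Gf; exact: measurable_itv.
rewrite (eq_integral (fun w => ((- K%:R)%:E * (g w)%:E
    + \sum_(k < K * 2 * n.+1) (harmonic n)%:E * (g w * \1_(A k) w)%:E)%E)); last first.
  move=> w _; rewrite /staircase mulrDr EFinD mulr_sumr -sumEFin muleC -EFinM.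
  by congr (_ + _)%E; apply: eq_bigr => k _; rewrite -EFinM mulrCA.
have ihA k : P.-integrable setT (fun w => ((harmonic n)%:E * (g w * \1_(A k) w)%:E)%E).
  by apply: integrableZl => //; exact: integrable_mul_indic.
rewrite integralD //; first last.
- by apply: integrable_sum => // k _.
- exact: integrableZl.
rewrite integralZl // g_mean0 // mule0 add0e integral_sum //.
apply: big1 => k _; rewrite integralZl ?integral_mul_indic_eq0 ?mule0 //.
exact: integrable_mul_indic.
Qed.

Lemma staircase_approx f (K n : nat) w : `|f w| < K%:R ->
  0 <= f w - staircase f K n w <= harmonic n.
Proof.
move=> fK; rewrite ltr_norml in fK; case/andP: fK => fK1 fK2.
have n0 : 0 < n.+1%:R :> R by rewrite ltr0Sn.
set y := (f w + K%:R) * n.+1%:R.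
have y0 : 0 <= y by rewrite mulr_ge0 ?ltW //; lra.
have ltm : (Num.truncn y <= K * 2 * n.+1)%N.
  rewrite truncn_le_nat (lt_le_trans (y := (K * 2 * n.+1)%:R)) ?ler_nat //.
  rewrite !natrM /y ltr_pM2r //; lra.
have -> : staircase f K n w = - K%:R + (Num.truncn y)%:R * harmonic n.
  rewrite /staircase -(sum_ltn_ord ltm) natr_sum mulr_suml.
  congr (_ + _); apply: eq_bigr => k _; rewrite mulrC indicE.
  congr (_%:R * _); congr (nat_of_bool _).
  apply/idP/idP; rewrite inE /= in_itv /= andbT ltnNge truncn_le_nat -leNgt /y;
    by rewrite -ler_pdivrMr // -lerBlDr.
have /andP[ty1 ty2] := truncn_itv y0.
have -> : f w - (- K%:R + (Num.truncn y)%:R * harmonic n) =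
    (y - (Num.truncn y)%:R) * harmonic n.
  by rewrite /y /=; field; rewrite gt_eqF.
rewrite mulr_ge0 ?subr_ge0 ?harmonic_ge0 //= ler_piMl ?harmonic_ge0 //.
by rewrite -natr1 in ty2; lra.
Qed.

Lemma integral_mul_measurable_wrt_eq0 (f : T -> R) (M : R) :
  measurable_wrt G f -> (forall w, `|f w| <= M) ->
  (\int[P]_w (g w * f w)%:E = 0)%E.
Proof.
move=> Gf fM; pose K := (Num.truncn M).+1.
have mf : measurable_fun setT f.
  by move=> _ B mB; rewrite setTI; exact/G_measurable/Gf.
have fK w : `|f w| < K%:R by apply: le_lt_trans (fM w) (truncnS_gt M).
have close n w : `|f w - staircase f K n w| <= harmonic n.
  by have /andP[s0 s1] := staircase_approx n (fK w); rewrite ger0_norm.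
have mstair n : measurable_fun setT (staircase f K n).
  apply: measurable_funD; first exact: measurable_cst.
  apply: measurable_sum => k; apply: measurable_funM; first exact: measurable_cst.
  by apply/measurable_indic/G_measurable/Gf; exact: measurable_itv.
have stair_bd n w : `|staircase f K n w| <= M + 1.
  have := close n w; have := fM w; have := harmonic_ge0 n.
  have : harmonic n <= 1 :> R by rewrite /harmonic /=; rewrite invf_le1 ?ler1n ?ltr0Sn.
  by rewrite !ler_norml => ? ? /andP[? ?] /andP[? ?]; apply/andP; split; lra.
have ig_stair n := integrable_mul_bounded ig (mstair n) (stair_bd n).
have Ifin : (\int[P]_w (g w * f w)%:E)%E \is a fin_num.
  exact/(integrable_fin_num measurableT)/(integrable_mul_bounded ig mf fM).
have Jfin : (\int[P]_w (`|g w|)%:E)%E \is a fin_num.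
  exact/(integrable_fin_num measurableT)/integrable_norm.
rewrite -(fineK Ifin); congr EFin; apply/normr0_eq0/le_anti.
rewrite normr_ge0 andbT.
apply: (@le0_of_le_harmonicM _ _ (fine (\int[P]_w (`|g w|)%:E))).
move=> n; rewrite -lee_fin EFinM (fineK Jfin) -abse_EFin fineK //.
apply: abse_integral_mul_le (ig_stair n) _ (close n) => //.
exact: integral_mul_staircase_eq0.
Qed.

End ZeroConditionalMean.

Section StochasticMirrorDescent.
(* Otherwise the player index of these dependent families would become implicit. *)
Local Unset Implicit Arguments.
Variables (R : realType) (d : measure_display) (T : measurableType d).
Variables (P : probability T R) (N : nat) (dim : 'I_N -> nat).
Variables (X : forall i, set 'rV[R]_(dim i)) (psi : forall i, 'rV[R]_(dim i) -> R).
Variables (rho theta kappa C : R) (p pi0 : forall i, 'rV[R]_(dim i)).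
Variables (F : nat -> set (set T)) (pi xi : nat -> T -> forall i, 'rV[R]_(dim i)).

Hypotheses (X_compact : forall i, compact (X i)) (rho_gt0 : 0 < rho).
Hypothesis psi_differentiable : forall i x, X i x -> differentiable (psi i) x.
Hypothesis psi_strongly_convex : forall i, strongly_convex_on (X i) (psi i) rho.
Hypotheses (kappa_gt0 : 0 < kappa) (kappa_lt_theta : kappa < theta).
Hypothesis X_p : forall i, X i (p i).
Hypotheses (F_sigma : forall t, sigma_algebra setT (F t))
  (F_measurable : forall t, F t `<=` measurable).
Hypothesis X_pi : forall t w i, X i (pi t w i).
Hypothesis pi_adapted :
  forall t i j, measurable_wrt (F t) (fun w => pi t w i ord0 j).
Hypothesis pi_0 : forall w, pi 0%N w = pi0.
Hypothesis xi_measurable :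
  forall t i j, measurable_fun setT (fun w => xi t w i ord0 j).
Hypothesis xi_mean0 : forall t i j A, F t A ->
  (\int[P]_(w in A) (xi t w i ord0 j)%:E = 0)%E.
Hypothesis xi_variance : forall t i A, F t A ->
  (\int[P]_(w in A) ((enorm (xi t w i)) ^+ 2)%:E <= (C ^+ 2)%:E * P A)%E.
Hypothesis bregman_measurable :
  forall t, measurable_fun setT (fun w => bregmanP psi p (pi t w)).
Hypothesis one_step : forall t : nat,
  {ae P, forall w,
    bregmanP psi p (pi t.+1 w) - bregmanP psi p (pi t w)
      + bregmanP psi (pi t.+1 w) (pi t w)
    <= stepsize kappa theta t *
         (theta * bregmanP psi (pi t.+1 w) (pi t w)
          - kappa * bregmanP psi p (pi t w))
       + stepsize kappa theta t *
         \sum_(i < N) einner (xi t w i) (pi t.+1 w i - p i)}.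
Local Set Implicit Arguments.

Let eta := stepsize kappa theta.
Let theta_gt0 : 0 < theta. Proof. exact: lt_trans kappa_lt_theta. Qed.
Let D t w := bregmanP psi p (pi t w).
Let noise_sqr t w := \sum_(i < N) enorm (xi t w i) ^+ 2.
Let noise_gap t w := \sum_(i < N) einner (xi t w i) (pi t w i - p i).

Lemma bregman_ge0 t w : 0 <= D t w.
Proof.
apply: (bregmanP_ge0 (ltW rho_gt0) psi_strongly_convex) => // i.
exact/psi_differentiable/X_pi.
Qed.

Lemma bregman_step_ae t : {ae P, forall w,
  D t.+1 w <= (1 - kappa * eta t) * D t w + eta t ^+ 2 / rho * noise_sqr t w
              + eta t * noise_gap t w}.
Proof.
apply: filterS (one_step t) => w step.
pose B := bregmanP psi (pi t.+1 w) (pi t w).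
pose Q := \sum_(i < N) enorm (pi t.+1 w i - pi t w i) ^+ 2.
apply: (@descent_step _ rho _ theta _ _ _ B Q
  (\sum_(i < N) einner (xi t w i) (pi t.+1 w i - pi t w i))).
- exact: rho_gt0.
- exact: stepsize_gt0.
- exact: theta_stepsize_le_half.
- apply: bregmanP_ge_sum_sqr psi_strongly_convex _ _ _ => // i.
  exact/psi_differentiable/X_pi.
- by apply: sumr_ge0 => i _; exact: sqr_ge0.
- rewrite /noise_sqr !mulr_sumr -big_split; apply: ler_sum => i _.
  exact: einner_young.
- rewrite /noise_gap -big_split /=.
  under eq_bigr => i _ do rewrite -einnerDr addrA subrK.
  exact: step.
Qed.

Let F_setT t : F t setT.
Proof. by case: (F_sigma t) => F0 FC _; rewrite -(setD0 setT); exact: FC. Qed.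

Let pi_coord_measurable t i j : measurable_fun setT (fun w => pi t w i ord0 j).
Proof. by move=> _ B mB; rewrite setTI; exact/F_measurable/pi_adapted. Qed.

Let xi_sqr_measurable t i : measurable_fun setT (fun w => enorm (xi t w i) ^+ 2).
Proof.
under eq_fun => w do rewrite enorm_sqr.
by apply: measurable_sum => j; exact: measurable_funX.
Qed.

Let integral_xi_sqr_le t i :
  (\int[P]_w (enorm (xi t w i) ^+ 2)%:E <= (C ^+ 2)%:E)%E.
Proof. by have := xi_variance t i _ (F_setT t); rewrite probability_setT mule1. Qed.

Let integrable_xi_sqr t i :
  P.-integrable setT (EFin \o (fun w => enorm (xi t w i) ^+ 2)).
Proof.
apply/integrableP; split; first exact/measurable_EFinP.
under eq_integral => w _ do rewrite gee0_abs ?lee_fin ?sqr_ge0 //.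
exact: le_lt_trans (integral_xi_sqr_le t i) (ltry _).
Qed.

Lemma integrable_noise_sqr t : P.-integrable setT (EFin \o noise_sqr t).
Proof.
have := integrable_sum measurableT (index_enum 'I_N)
  (fun i (_ : predT i) => integrable_xi_sqr t i).
by apply: eq_integrable => // w _; rewrite /= sumEFin.
Qed.

Lemma integral_noise_sqr_le t :
  (\int[P]_w (noise_sqr t w)%:E <= (N%:R * C ^+ 2)%:E)%E.
Proof.
under eq_integral => w _ do rewrite /noise_sqr -sumEFin.
rewrite integral_sum //; last by move=> i; exact: integrable_xi_sqr.
rewrite (_ : (N%:R * C ^+ 2)%:E = \sum_(i < N) (C ^+ 2)%:E)%E; last first.
  by rewrite sumEFin sumr_const card_ord mulr_natl.
by apply: lee_sum => i _; exact: integral_xi_sqr_le.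
Qed.

Local Unset Implicit Arguments.
Let gap t i j w := xi t w i ord0 j * (pi t w i ord0 j - p i ord0 j).

Let noise_gapE t w : noise_gap t w = \sum_(i < N) \sum_(j < dim i) gap t i j w.
Proof. by apply: eq_bigr => i _; apply: eq_bigr => j _; rewrite !mxE. Qed.

Let integrable_xi t i j : P.-integrable setT (EFin \o (fun w => xi t w i ord0 j)).
Proof.
apply: integrable_of_sqr_le (integrable_xi_sqr t i) _ => // w.
exact: sqr_coord_le_enorm.
Qed.

Let pi_gap_bounded t i j : exists M, forall w, `|pi t w i ord0 j - p i ord0 j| <= M.
Proof.
have [M HM] := compact_row_coord_bounded (X_compact i); exists (M + M) => w.
by apply: le_trans (ler_normB _ _) _; rewrite lerD ?HM.
Qed.

Let pi_gap_measurable t i j :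
  measurable_fun setT (fun w => pi t w i ord0 j - p i ord0 j).
Proof. by apply: measurable_funB => //; exact: measurable_cst. Qed.

Let integrable_gap t i j : P.-integrable setT (EFin \o gap t i j).
Proof.
have [M HM] := pi_gap_bounded t i j.
exact: integrable_mul_bounded (integrable_xi t i j) (pi_gap_measurable t i j) HM.
Qed.

Let integral_gap_eq0 t i j : (\int[P]_w (gap t i j w)%:E = 0)%E.
Proof.
have [M HM] := pi_gap_bounded t i j.
apply: (integral_mul_measurable_wrt_eq0 (F_measurable t) (F_setT t)
  (xi_measurable t i j) (integrable_xi t i j) (xi_mean0 t i j) _ HM).
move=> B mB; apply: (pi_adapted t i j ((fun y => y - p i ord0 j) @^-1` B)).
have : measurable_fun setT (fun y : R => y - p i ord0 j).
  by apply: measurable_funB => //; exact: measurable_cst.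
by move=> /(_ measurableT B mB); rewrite setTI.
Qed.
Local Set Implicit Arguments.

Let integrable_gap_sum t i :
  P.-integrable setT (fun w => \sum_(j < dim i) (gap t i j w)%:E)%E.
Proof.
have := integrable_sum measurableT (index_enum _)
  (fun j (_ : predT j) => integrable_gap t i j).
exact.
Qed.

Lemma integrable_noise_gap t : P.-integrable setT (EFin \o noise_gap t).
Proof.
have := integrable_sum measurableT (index_enum _)
  (fun i (_ : predT i) => integrable_gap_sum t i).
apply: eq_integrable => // w _; rewrite /= noise_gapE -sumEFin.
by apply: eq_bigr => i _; rewrite sumEFin.
Qed.

Lemma integral_noise_gap_eq0 t : (\int[P]_w (noise_gap t w)%:E = 0)%E.
Proof.
rewrite (eq_integral (fun w => \sum_(i < N) \sum_(j < dim i) (gap t i j w)%:E)%E).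
  rewrite integral_sum //.
  apply: big1 => i _; rewrite integral_sum //.
    by apply: big1 => j _; exact: integral_gap_eq0.
  by move=> j; exact: integrable_gap.
move=> w _; rewrite noise_gapE -sumEFin.
by apply: eq_bigr => i _; rewrite sumEFin.
Qed.

Lemma integral_bregman_step t : P.-integrable setT (EFin \o D t) ->
  (\int[P]_w (D t.+1 w)%:E <= ((1 - kappa * eta t) * fine (\int[P]_w (D t w)%:E)
                          + eta t ^+ 2 / rho * (N%:R * C ^+ 2))%:E)%E.
Proof.
move=> iD; pose a := 1 - kappa * eta t; pose b := eta t ^+ 2 / rho.
have iZ := integrable_noise_sqr t; have iS := integrable_noise_gap t.
have mZ := measurable_int _ iZ; have mS := measurable_int _ iS.
move: mZ mS => /measurable_EFinP mZ /measurable_EFinP mS.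
apply: le_trans (ae_le_integral_ge0 _ _ (@bregman_ge0 t.+1) (bregman_step_ae t)) _.
- exact: bregman_measurable.
- apply: measurable_funD; last exact: measurable_funM.
  apply: measurable_funD; last exact: measurable_funM.
  exact/measurable_funM/bregman_measurable.
have iaD := integrableZl measurableT a iD.
have ibZ := integrableZl measurableT b iZ.
have icS := integrableZl measurableT (eta t) iS.
rewrite (eq_integral (fun w => ((a%:E * (D t w)%:E + b%:E * (noise_sqr t w)%:E)
    + (eta t)%:E * (noise_gap t w)%:E)%E)); last by move=> w _; rewrite !EFinD !EFinM.
rewrite integralD //; last exact: integrableD.
rewrite integralD // !integralZl // integral_noise_gap_eq0 mule0 adde0.
rewrite -(fineK (integrable_fin_num measurableT iD)).
rewrite -(fineK (integrable_fin_num measurableT iZ)).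
rewrite -!EFinM -EFinD lee_fin lerD2l ler_wpM2l ?divr_ge0 ?sqr_ge0 ?(ltW rho_gt0) //.
by rewrite -lee_fin fineK ?integral_noise_sqr_le // integrable_fin_num.
Qed.

Lemma integrable_bregman t : P.-integrable setT (EFin \o D t).
Proof.
elim: t => [|t IH].
  have := finite_measure_integrable_cst P (bregmanP psi p pi0) measurableT.
  by apply: eq_integrable => // w _; rewrite /= /D pi_0.
apply: ge0_lty_integrable; [exact: bregman_measurable | exact: bregman_ge0 |].
exact: le_lt_trans (integral_bregman_step IH) (ltry _).
Qed.

Lemma expected_bregman_le t :
  (\int[P]_w (D t.+1 w)%:E <= (eta t * ((2 * theta - kappa) * bregmanP psi p pi0
      + N%:R * C ^+ 2 / rho * \sum_(s < t.+1) eta s))%:E)%E.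
Proof.
pose a s := fine (\int[P]_w (D s w)%:E).
have aE s : (\int[P]_w (D s w)%:E = (a s)%:E)%E.
  by rewrite fineK // integrable_fin_num // integrable_bregman.
have a0 : a 0%N = bregmanP psi p pi0.
  rewrite /a (eq_integral (fun=> (bregmanP psi p pi0)%:E)); last first.
    by move=> w _; rewrite /D pi_0.
  rewrite integral_cst // -[RHS]/(fine (bregmanP psi p pi0)%:E) -[in RHS](mule1 _%:E).
  by congr (fine (_ * _)); exact: probability_setT.
rewrite aE lee_fin -a0; apply: stepsize_recursion => // s.
have := integral_bregman_step (integrable_bregman s); rewrite aE lee_fin.
move=> /le_trans; apply; rewrite le_eqVlt; apply/orP; left; apply/eqP.
by rewrite /a /eta; ring.
Qed.

End StochasticMirrorDescent.

Theorem lemma5 (R : realType) (d : measure_display) (T : measurableType d)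
  (P : probability T R)
  (N : nat) (dim : 'I_N -> nat) (X : forall i, set 'rV[R]_(dim i))
  (psi : forall i, 'rV[R]_(dim i) -> R) (rho theta kappa C : R)
  (p pi0 : forall i, 'rV[R]_(dim i))
  (F : nat -> set (set T))
  (pi xi : nat -> T -> forall i, 'rV[R]_(dim i)) :
  (forall i, X i !=set0) -> (forall i, compact (X i)) ->
  (forall i, convex_set (X i)) ->
  0 < rho ->
  (forall i x, X i x -> differentiable (psi i) x) ->
  (forall i, strongly_convex_on (X i) (psi i) rho) ->
  0 < kappa -> kappa < theta ->
  (forall i, X i (p i)) ->
  (forall t, sigma_algebra setT (F t)) ->
  (forall t, F t `<=` measurable) ->
  (forall t, F t `<=` F t.+1) ->
  (forall t w i, X i (pi t w i)) ->
  (forall t i j, measurable_wrt (F t) (fun w => pi t w i ord0 j)) ->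
  (forall w, pi 0%N w = pi0) ->
  (forall t i j, measurable_fun setT (fun w => xi t w i ord0 j)) ->
  (forall t i j A, F t A ->
     (\int[P]_(w in A) (xi t w i ord0 j)%:E = 0)%E) ->
  (forall t i A, F t A ->
     (\int[P]_(w in A) ((enorm (xi t w i)) ^+ 2)%:E <= (C ^+ 2)%:E * P A)%E) ->
  (forall t, measurable_fun setT (fun w => bregmanP psi p (pi t w))) ->
  (forall t, measurable_fun setT (fun w => bregmanP psi (pi t.+1 w) (pi t w))) ->
  (forall t : nat,
     {ae P, forall w,
       bregmanP psi p (pi t.+1 w) - bregmanP psi p (pi t w)
         + bregmanP psi (pi t.+1 w) (pi t w)
       <= 1 / (kappa * t%:R + 2 * theta) *
            (theta * bregmanP psi (pi t.+1 w) (pi t w)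
             - kappa * bregmanP psi p (pi t w))
          + 1 / (kappa * t%:R + 2 * theta) *
            \sum_(i < N) einner (xi t w i) (pi t.+1 w i - p i)}) ->
  forall t : nat,
    (\int[P]_w (bregmanP psi p (pi t.+1 w))%:E <=
      ((2 * theta - kappa) / (kappa * t%:R + 2 * theta) * bregmanP psi p pi0
       + N%:R * C ^+ 2 / (rho * (kappa * t%:R + 2 * theta)) *
         (1 / kappa * ln (kappa / (2 * theta) * t%:R + 1) + 1 / (2 * theta)))%:E)%E.
Proof.
move=> _ Xc _ rho0 dpsi scv k0 kt Xp sF Fm _ Xpi wpi pi0E mxi xi0 xi2 mD _ Hae t.
have th0 : 0 < theta := lt_trans k0 kt.
apply: le_trans (expected_bregman_le Xc rho0 dpsi scv k0 kt Xp sF Fm Xpi wpi pi0E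
  mxi xi0 xi2 mD Hae t) _.
rewrite lee_fin; set B := N%:R * C ^+ 2 / rho.
have B0 : 0 <= B.
  by apply: divr_ge0; [apply: mulr_ge0; [exact: ler0n | exact: sqr_ge0] | exact: ltW].
set L := 1 / (2 * theta) + 1 / kappa * ln (kappa / (2 * theta) * t%:R + 1).
apply: (@le_trans _ _ (stepsize kappa theta t *
    ((2 * theta - kappa) * bregmanP psi p pi0 + B * L))).
  rewrite ler_wpM2l ?(ltW (stepsize_gt0 _ _ _)) // lerD2l ler_wpM2l //.
  exact: sum_stepsize_le_ln.
rewrite le_eqVlt; apply/orP; left; apply/eqP; rewrite /stepsize /B /L; field.
by rewrite !gt_eqF // stepsize_denom_gt0.
Qed.
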